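(* Let $(Y,\preceq,\prec,\to)$ be a solid vector space. Then (C6) each convergent sequence in $Y$ has a unique limit, and (C7) each convergent sequence $(x_n)$ in $Y$ is bounded, i.e. there exist $a,b\in Y$ with $a\preceq x_n\preceq b$ for all $n$.
   Context: Vector space with convergence: a real vector space $Y$ with a relation $\to$ between sequences in $Y$ and points of $Y$ (write $x_n\to x$, $x$ ''a limit''; uniqueness not assumed a priori) such that (C1) $x_n\to x$, $y_n\to y$ imply $x_n+y_n\to x+y$; (C2) $x_n\to x$, $\lambda\in\mathbb R$ imply $\lambda x_n\to\lambda x$; (C3) $\lambda_n\to\lambda$ in $\mathbb R$ imply $\lambda_n x\to\lambda x$. $A\subseteq Y$ is open if $x_n\to x\in A$ implies $x_n\in A$ for all but finitely many $n$; closed if $x_n\to x$, $x_n\in A$ $\forall n$ imply $x\in A$; $A^\circ$ is the union of all open subsets of $A$. A cone is a nonempty closed $K$ with $\lambda K\subseteq K$ ($\lambda\ge0$), $K+K\subseteq K$, $K\cap(-K)=\{0\}$; solid if $K\ne\{0\}$, $K^\circ\ne\emptyset$. A vector ordering is a partial order $\preceq$ with (V1) $x\preceq y\Rightarrow x+z\preceq y+z$; (V2) $\lambda\ge0$, $x\preceq y\Rightarrow\lambda x\preceq\lambda y$; (V3) $x_n\to x$, $y_n\to y$, $x_n\preceq y_n$ $\forall n\Rightarrow x\preceq y$. Solid vector space: positive cone $K=\{x:x\succeq0\}$ solid, with $x\prec y$ iff $y-x\in K^\circ$. *)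

From HB Require Import structures.
From mathcomp Require Import all_boot all_order all_algebra.
From mathcomp Require Import all_classical all_reals topology normedtype sequences.
Set Implicit Arguments. Unset Strict Implicit. Unset Printing Implicit Defensive.
Import Order.TTheory GRing.Theory Num.Theory.
Import numFieldNormedType.Exports.
Local Open Scope ring_scope.
Local Open Scope classical_set_scope.

Section VSC.
Variables (R : realType) (Y : lmodType R).
Variable conv : (nat -> Y) -> Y -> Prop.

Definition conv_C1 : Prop := forall (xs ys : nat -> Y) (x y : Y),
  conv xs x -> conv ys y -> conv (fun n => xs n + ys n) (x + y).
Definition conv_C2 : Prop := forall (xs : nat -> Y) (x : Y) (lam : R),
  conv xs x -> conv (fun n => lam *: xs n) (lam *: x).
Definition conv_C3 : Prop := forall (lams : nat -> R) (lam : R) (x : Y),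
  lams @ \oo --> lam -> conv (fun n => lams n *: x) (lam *: x).

Definition vector_space_with_convergence : Prop :=
  [/\ conv_C1, conv_C2 & conv_C3].

Definition conv_open (A : Y -> Prop) : Prop :=
  forall (xs : nat -> Y) (x : Y), conv xs x -> A x ->
    exists N : nat, forall n : nat, (N <= n)%N -> A (xs n).
Definition conv_closed (A : Y -> Prop) : Prop :=
  forall (xs : nat -> Y) (x : Y), conv xs x -> (forall n, A (xs n)) -> A x.
Definition conv_interior (A : Y -> Prop) : Y -> Prop :=
  fun x => exists U : Y -> Prop, [/\ conv_open U, (forall y, U y -> A y) & U x].

Definition is_cone (K : Y -> Prop) : Prop :=
  [/\ (exists x, K x), conv_closed K,
      (forall (lam : R) x, 0 <= lam -> K x -> K (lam *: x)),
      (forall x y, K x -> K y -> K (x + y)) &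
      (forall x, K x -> K (- x) -> x = 0)].

Definition is_solid_cone (K : Y -> Prop) : Prop :=
  [/\ is_cone K, (exists x, K x /\ x <> 0) & (exists x, conv_interior K x)].

Variable le : Y -> Y -> Prop.

Definition is_vector_ordering : Prop :=
  [/\ (forall x, le x x),
      (forall x y, le x y -> le y x -> x = y) &
      (forall x y z, le x y -> le y z -> le x z)] /\
  [/\ (forall x y z, le x y -> le (x + z) (y + z)),
      (forall (lam : R) x y, 0 <= lam -> le x y -> le (lam *: x) (lam *: y)) &
      (forall (xs ys : nat -> Y) x y, conv xs x -> conv ys y ->
         (forall n, le (xs n) (ys n)) -> le x y)].

Definition positive_cone : Y -> Prop := fun x => le 0 x.

Definition strict_lt (x y : Y) : Prop := conv_interior positive_cone (y - x).

Definition solid_vector_space : Prop :=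
  [/\ vector_space_with_convergence, is_vector_ordering &
      is_solid_cone positive_cone].
End VSC.

From HB Require Import structures.
From mathcomp Require Import all_boot all_order all_algebra.
From mathcomp Require Import all_classical all_reals topology normedtype sequences.
Local Open Scope ring_scope.
Local Open Scope classical_set_scope.
Import Order.TTheory GRing.Theory Num.Theory.
Import numFieldNormedType.Exports.

(* Uniqueness: if x_n -> x and x_n -> y then 0 = x_n - x_n -> x - y, and the
   constant sequence 0 also tends to 0, so closedness of the order gives
   0 <= x - y <= 0.  Boundedness: an interior point e of the positive cone is
   absorbing, since y/(n+1) -> 0 forces e - y/(n+1) into an open subset of the
   cone for large n, i.e. y <= (n+1) e.  A convergent sequence x_n -> x is
   eventually below x + e (as x + e - x_n -> e), and finitely many terms plus
   x + e are dominated by one multiple of e; lower bounds come from -x_n. *)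

Section SolidVectorSpace.
Variables (R : realType) (Y : lmodType R) (conv : (nat -> Y) -> Y -> Prop).
Hypotheses (C1 : conv_C1 conv) (C2 : conv_C2 conv) (C3 : conv_C3 conv).

Lemma conv_cst (x : Y) : conv (fun=> x) x.
Proof.
have hone : (fun=> 1) @ \oo --> (1 : R) by apply: cvg_cst.
by have := C3 _ _ x hone; rewrite scale1r.
Qed.

Lemma conv_opp {xs : nat -> Y} {x : Y} :
  conv xs x -> conv (fun n => - xs n) (- x).
Proof.
move/(C2 _ _ (-1)); rewrite scaleN1r.
by under eq_fun do rewrite scaleN1r.
Qed.

Lemma conv_sub {xs ys : nat -> Y} {x y : Y} :
  conv xs x -> conv ys y -> conv (fun n => xs n - ys n) (x - y).
Proof. by move=> hx /conv_opp; apply: C1. Qed.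

Lemma conv_harmonic_scale (y : Y) : conv (fun n => n.+1%:R^-1 *: y) 0.
Proof. by rewrite -(scale0r y); apply: C3; exact: cvg_harmonic. Qed.

Variable le : Y -> Y -> Prop.
Hypotheses (leYxx : forall x, le x x)
  (leY_anti : forall x y, le x y -> le y x -> x = y)
  (leY_trans : forall x y z, le x y -> le y z -> le x z)
  (leYD2r : forall x y z, le x y -> le (x + z) (y + z))
  (leY_scale : forall (lam : R) x y, 0 <= lam -> le x y -> le (lam *: x) (lam *: y))
  (leY_closed : forall (xs ys : nat -> Y) x y, conv xs x -> conv ys y ->
     (forall n, le (xs n) (ys n)) -> le x y).

Lemma conv_limit_unique (xs : nat -> Y) (x y : Y) :
  conv xs x -> conv xs y -> x = y.
Proof.
move=> hx hy; have h0 : conv (fun=> 0) (x - y).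
  by under eq_fun => n do rewrite -(subrr (xs n)); exact: conv_sub.
apply/eqP; rewrite -subr_eq0; apply/eqP.
by apply: leY_anti; [apply: leY_closed h0 (conv_cst 0) _ | apply: leY_closed (conv_cst 0) h0 _].
Qed.

Lemma le0_subr (x y : Y) : le 0 (y - x) <-> le x y.
Proof.
split=> [/(leYD2r _ _ x)|/(leYD2r _ _ (- x))]; first by rewrite add0r subrK.
by rewrite subrr.
Qed.

Lemma le_scale_nonneg {u : Y} {c d : R} :
  le 0 u -> c <= d -> le (c *: u) (d *: u).
Proof.
move=> u0 cd; apply/le0_subr; rewrite -scalerBl -(scaler0 _ (d - c)).
by apply: leY_scale; rewrite ?subr_ge0.
Qed.

Variable e : Y.
Hypothesis e_interior : conv_interior conv (positive_cone le) e.

Lemma interior_ge0 : le 0 e.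
Proof. by case: e_interior => U [_ UK]; apply: UK. Qed.

Lemma interior_absorbing (y : Y) : exists c : R, le y (c *: e).
Proof.
case: e_interior => U [Uopen UK Ue].
have hconv := conv_sub (conv_cst e) (conv_harmonic_scale y).
rewrite subr0 in hconv.
have [N /(_ N (leqnn N)) /UK /le0_subr hN] := Uopen _ _ hconv Ue.
exists N.+1%:R; have := leY_scale _ _ _ (ler0n _ N.+1) hN.
by rewrite scalerA mulfV ?scale1r ?pnatr_eq0.
Qed.

Lemma conv_eventually_le {xs : nat -> Y} {x : Y} :
  conv xs x -> exists N, forall n, (N <= n)%N -> le (xs n) (x + e).
Proof.
case: e_interior => U [Uopen UK Ue] hx.
have hconv := C1 _ _ _ _ (conv_cst e) (conv_sub (conv_cst x) hx).
rewrite subrr addr0 in hconv.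
have [N HN] := Uopen _ _ hconv Ue.
by exists N => n /HN /UK; rewrite addrA [e + x]addrC => /le0_subr.
Qed.

Lemma le_scale_trans (y : Y) (c d : R) : le y (c *: e) -> c <= d -> le y (d *: e).
Proof. by move=> hy cd; exact: leY_trans hy (le_scale_nonneg interior_ge0 cd). Qed.

Lemma prefix_le_scale (xs : nat -> Y) (M : nat) :
  exists c : R, forall n, (n < M)%N -> le (xs n) (c *: e).
Proof.
elim: M => [|M [c Hc]]; first by exists 0.
have [c' Hc'] := interior_absorbing (xs M).
exists (Num.max c c') => n; rewrite ltnS leq_eqVlt => /orP [/eqP -> | /Hc h].
  by apply: le_scale_trans Hc' _; rewrite le_max lexx orbT.
by apply: le_scale_trans h _; rewrite le_max lexx.
Qed.

Lemma conv_bounded_above {xs : nat -> Y} {x : Y} :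
  conv xs x -> exists b, forall n, le (xs n) b.
Proof.
move=> /conv_eventually_le [N tail].
have [c Hc] := prefix_le_scale xs N.
have [d Hd] := interior_absorbing (x + e).
exists (Num.max c d *: e) => n; case: (leqP N n) => [/tail h | /Hc h].
  by apply: le_scale_trans (leY_trans _ _ _ h Hd) _; rewrite le_max lexx orbT.
by apply: le_scale_trans h _; rewrite le_max lexx.
Qed.

Lemma conv_bounded (xs : nat -> Y) (x : Y) :
  conv xs x -> exists a b : Y, forall n, le a (xs n) /\ le (xs n) b.
Proof.
move=> hx; have [b Hb] := conv_bounded_above hx.
have [b' Hb'] := conv_bounded_above (conv_opp hx).
exists (- b'), b => n; split => //.
by apply/le0_subr; rewrite opprK addrC -[xs n]opprK; apply/le0_subr.
Qed.

End SolidVectorSpace.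

Theorem theorem6p6 (R : realType) (Y : lmodType R)
  (conv : (nat -> Y) -> Y -> Prop) (le : Y -> Y -> Prop) :
  solid_vector_space conv le ->
  (forall (xs : nat -> Y) (x y : Y), conv xs x -> conv xs y -> x = y) /\
  (forall (xs : nat -> Y) (x : Y), conv xs x ->
     exists a b : Y, forall n : nat, le a (xs n) /\ le (xs n) b).
Proof.
move=> [[C1 C2 C3] [[leYxx leY_anti leY_trans] [leYD2r leY_scale leY_closed]]].
move=> [_ _ [e e_interior]]; split.
  exact: conv_limit_unique C1 C2 C3 _ leYxx leY_anti leY_closed.
exact: conv_bounded C1 C2 C3 _ leY_trans leYD2r leY_scale _ e_interior.
Qed.
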